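(* Let $p\ge1$, $s\ge r\ge2$, let $Q$ be an $s$-vertex $r$-graph and let $\mathcal P$ be a hereditary property of $r$-graphs. Then $\lambda^{(p)}(Q,\mathcal P)\ge\pi(Q,\mathcal P)$.
   Context: An $r$-graph ($r\ge 2$) is a finite hypergraph all of whose edges have exactly $r$ vertices. For $I\subseteq V(H)$, $H[I]$ denotes the induced subhypergraph on $I$. For an $s$-vertex $r$-graph $Q$ and an $r$-graph $H$, $\mathcal N(Q,H)$ is the number of (not necessarily induced) subgraphs of $H$ isomorphic to $Q$. For an $n$-vertex $r$-graph $H$ with vertex set $[n]$ and $\mathbf x\in\mathbb R^n$, $P_{Q,H}(\mathbf x)=s!\sum_{\{i_1,\dots,i_s\}\in\binom{[n]}{s}}\mathcal N(Q,H[\{i_1,\dots,i_s\}])\,x_{i_1}\cdots x_{i_s}$, and for $p\ge1$, $\lambda^{(p)}(Q,H)=\max_{\|\mathbf x\|_p=1}P_{Q,H}(\mathbf x)$. A hereditary property $\mathcal P$ of $r$-graphs is a family of $r$-graphs closed under isomorphism and under taking induced subgraphs; as a standing assumption, whenever $H\in\mathcal P$, the disjoint union of $H$ with an isolated vertex is also in $\mathcal P$. $\mathcal P_n$ is the set of members of $\mathcal P$ with $n$ vertices. $ex(Q,\mathcal P_n)=\max\{\mathcal N(Q,H):H\in\mathcal P_n\}$ and $\pi(Q,\mathcal P)=\lim_{n\to\infty}ex(Q,\mathcal P_n)/\binom ns$ (this limit exists). $\lambda^{(p)}(Q,\mathcal P_n)=\max\{\lambda^{(p)}(Q,H):H\in\mathcal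 P_n\}$ and $\lambda^{(p)}(Q,\mathcal P)=\lim_{n\to\infty}\lambda^{(p)}(Q,\mathcal P_n)n^{s/p-s}$ (this limit exists). *)

From HB Require Import structures.
From mathcomp Require Import all_boot all_order all_algebra.
From mathcomp Require Import all_classical all_reals all_analysis.
Set Implicit Arguments. Unset Strict Implicit. Unset Printing Implicit Defensive.
Import Order.TTheory GRing.Theory Num.Theory.
Local Open Scope ring_scope.

Definition rgraph_on (n : nat) := {set {set 'I_n}}.

Definition is_rgraph (r n : nat) (H : rgraph_on n) : bool :=
  [forall e in H, #|e| == r].

(* Copies of Q (on 'I_s) in H (on 'I_n): (not necessarily induced) subgraphs
   (V', E') of H isomorphic to Q, recorded as pairs (vertex set, edge set). *)
Definition copies (s n : nat) (Q : rgraph_on s) (H : rgraph_on n)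
  : {set ({set 'I_n} * {set {set 'I_n}})} :=
  [set ((f @: [set: 'I_s]), [set f @: e | e : {set 'I_s} in Q]) |
     f : {ffun 'I_s -> 'I_n} in [set f : {ffun 'I_s -> 'I_n} |
             injectiveb f && [forall e : {set 'I_s} in Q, (f @: e) \in H]]].

(* N(Q, H[S]) : the number of copies of Q in the induced subgraph H[S],
   i.e. the copies of Q in H whose vertex set lies inside S. *)
Definition Ncount_in (s n : nat) (Q : rgraph_on s) (H : rgraph_on n)
  (S : {set 'I_n}) : nat :=
  #|[set c in copies Q H | c.1 \subset S]|.

Definition Ncount (s n : nat) (Q : rgraph_on s) (H : rgraph_on n) : nat :=
  Ncount_in Q H [set: 'I_n].

Definition PQH {R : realType} (s n : nat) (Q : rgraph_on s) (H : rgraph_on n)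
  (x : 'I_n -> R) : R :=
  (s`!)%:R * \sum_(S : {set 'I_n} | #|S| == s)
                 (Ncount_in Q H S)%:R * \prod_(i in S) x i.

Definition pnorm {R : realType} (n : nat) (p : R) (x : 'I_n -> R) : R :=
  (\sum_(i < n) `|x i| `^ p) `^ p^-1.

(* lambda^(p)(Q, H) = max_{||x||_p = 1} P_{Q,H}(x)  (the max exists by
   compactness, so it equals the supremum) *)
Definition lambdaQH {R : realType} (p : R) (s n : nat) (Q : rgraph_on s)
  (H : rgraph_on n) : R :=
  sup [set PQH Q H x | x in [set x : 'I_n -> R | pnorm p x = 1]].

(* A hereditary property of r-graphs: for each n, a predicate on r-graphs on
   'I_n; members are r-graphs; closed under isomorphism and taking induced
   subgraphs (both captured by: the pull-back of H along any injection
   'I_m -> 'I_n is again in the property); and closed under adding an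
   isolated vertex (standing assumption). *)
Definition pullback (m n : nat) (f : 'I_m -> 'I_n) (H : rgraph_on n)
  : rgraph_on m := [set e : {set 'I_m} | f @: e \in H].

Definition add_isolated (n : nat) (H : rgraph_on n) : rgraph_on n.+1 :=
  [set (@widen_ord n n.+1 (leqnSn n)) @: e | e : {set 'I_n} in H].

Definition hereditary_property (r : nat) (P : forall n, pred (rgraph_on n))
  : Prop :=
  [/\ (forall n (H : rgraph_on n), P n H -> is_rgraph r H),
      (forall m n (f : 'I_m -> 'I_n) (H : rgraph_on n),
          injective f -> P n H -> P m (pullback f H)) &
      (forall n (H : rgraph_on n), P n H -> P n.+1 (add_isolated H))].

Definition exQP (s : nat) (Q : rgraph_on s) (P : forall n, pred (rgraph_on n))
  (n : nat) : nat :=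
  \max_(H : rgraph_on n | P n H) Ncount Q H.

Definition lambdaQPn {R : realType} (p : R) (s : nat) (Q : rgraph_on s)
  (P : forall n, pred (rgraph_on n)) (n : nat) : R :=
  \big[Num.max/0]_(H : rgraph_on n | P n H) lambdaQH p Q H.

(* the normalized sequences whose limits define pi(Q,P) and lambda^(p)(Q,P) *)
Definition pi_seq {R : realType} (s : nat) (Q : rgraph_on s)
  (P : forall n, pred (rgraph_on n)) (n : nat) : R :=
  (exQP Q P n)%:R / ('C(n, s))%:R.

Definition lambda_seq {R : realType} (p : R) (s : nat) (Q : rgraph_on s)
  (P : forall n, pred (rgraph_on n)) (n : nat) : R :=
  lambdaQPn p Q P n * (n%:R `^ (s%:R / p - s%:R)).

From HB Require Import structures.
From mathcomp Require Import all_boot all_order all_algebra.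
From mathcomp Require Import all_classical all_reals all_analysis.
From mathcomp Require Import ring.
Import Order.TTheory GRing.Theory Num.Theory.
Import numFieldNormedType.Exports.
Local Open Scope ring_scope.
Local Open Scope classical_set_scope.

(* Test the Lagrangian against the uniform vector x_i = n^(-1/p), which has
   unit p-norm.  Every copy of Q lives inside one s-set, so
   P_{Q,H}(x) >= s! N(Q,H) n^(-s/p), and after the normalisation n^(s/p-s)
   this is s! N(Q,H) / n^s = (N(Q,H) / C(n,s)) * (n^_s / n^s).  Maximising
   over H in P_n and letting n -> oo, the factor n^_s / n^s tends to 1. *)

Section Copies.
Variables (s n : nat) (Q : rgraph_on s) (H : rgraph_on n).

Lemma copies_vertex_card c : c \in copies Q H -> #|c.1| = s.
Proof.
case/imsetP => f; rewrite inE => /andP[/injectiveP f_inj _] -> /=.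
by rewrite card_imset // cardsT card_ord.
Qed.

Lemma Ncount_in_sum S :
  Ncount_in Q H S = (\sum_(c in copies Q H) (c.1 \subset S : nat))%N.
Proof.
rewrite /Ncount_in -sum1_card [RHS]big_mkcond [LHS]big_mkcond /=.
by apply: eq_bigr => c _; rewrite !inE; case: (c \in _); case: (_ \subset _).
Qed.

Lemma Ncount_le_sum_Ncount_in :
  (Ncount Q H <= \sum_(S : {set 'I_n} | #|S| == s) Ncount_in Q H S)%N.
Proof.
under eq_bigr => S _ do rewrite Ncount_in_sum.
rewrite /Ncount Ncount_in_sum exchange_big /=.
apply: leq_sum => c c_copy; rewrite finset.subsetT.
by rewrite (bigD1 c.1) ?subxx //= (copies_vertex_card _ c_copy).
Qed.

End Copies.

Section UniformVector.
Context {R : realType} {p : R}.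
Hypothesis p_gt0 : 0 < p.

Lemma pnorm_eq1_norm_le1 {n} (x : 'I_n -> R) :
  pnorm p x = 1 -> forall i, `|x i| <= 1.
Proof.
move=> x_unit i; rewrite leNgt; apply/negP => xi_gt1.
have one_powR (q : R) : 1 `^ q = 1 by rewrite powR1.
have xip_gt1 : 1 < `|x i| `^ p.
  by rewrite -[X in X < _](one_powR p) gt0_ltr_powR // nnegrE.
set a := \sum_(j < n) `|x j| `^ p.
have a_gt1 : 1 < a.
  apply: (lt_le_trans xip_gt1); rewrite /a (bigD1 i) //= lerDl.
  by apply: sumr_ge0 => j _; exact: powR_ge0.
have : 1 < a `^ p^-1.
  rewrite -[X in X < _](one_powR p^-1) gt0_ltr_powR ?nnegrE ?invr_gt0 //.
  exact: ltW (lt_trans ltr01 a_gt1).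
by rewrite -/(pnorm p x) x_unit ltxx.
Qed.

Lemma PQH_le_lambdaQH {s n} (Q : rgraph_on s) (H : rgraph_on n) (x : 'I_n -> R) :
  pnorm p x = 1 -> PQH Q H x <= lambdaQH p Q H.
Proof.
move=> x_unit; apply: ub_le_sup; last by exists x.
exists ((s`!)%:R * \sum_(S : {set 'I_n} | #|S| == s) (Ncount_in Q H S)%:R).
move=> _ [y y_unit <-]; apply: ler_wpM2l => //; apply: ler_sum => S _.
apply: ler_piMr => //; apply: (le_trans (ler_norm _)); rewrite normr_prod.
apply: prodr_ile1 => i _; rewrite normr_ge0.
exact: pnorm_eq1_norm_le1 y_unit i.
Qed.

Definition uniform_unit n : 'I_n -> R := fun _ => n%:R `^ (- p^-1).

Lemma pnorm_uniform_unit {n} : (0 < n)%N -> pnorm p (uniform_unit n) = 1.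
Proof.
move=> n_gt0; rewrite /pnorm /uniform_unit sumr_const card_ord.
rewrite ger0_norm ?powR_ge0 // -powRrM mulNr mulVf ?gt_eqF // powR_inv1 //.
by rewrite -(mulr_natr (n%:R)^-1 n) mulVf ?powR1 // pnatr_eq0 -lt0n.
Qed.

Lemma PQH_uniform_unit {s n} (Q : rgraph_on s) (H : rgraph_on n) :
  PQH Q H (uniform_unit n) =
  (s`!)%:R * (\sum_(S : {set 'I_n} | #|S| == s) (Ncount_in Q H S)%:R)
           * (n%:R `^ (- p^-1)) ^+ s.
Proof.
rewrite /PQH -mulrA mulr_suml; congr (_ * _); apply: eq_bigr => S /eqP S_card.
by rewrite prodr_const S_card.
Qed.

Lemma uniform_unit_scaling {s n} : (0 < n)%N ->
  (n%:R `^ (- p^-1)) ^+ s * n%:R `^ (s%:R / p - s%:R) = (n%:R ^+ s : R)^-1.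
Proof.
move=> n_gt0; have n_neq0 : (n%:R : R) != 0 by rewrite pnatr_eq0 -lt0n.
rewrite -powR_mulrn ?powR_ge0 // -powRrM -powRD ?n_neq0 ?implybT //.
have -> : - p^-1 * s%:R + (s%:R / p - s%:R) = - (s%:R : R).
  by rewrite mulNr mulrC; ring.
by rewrite powRN powR_mulrn.
Qed.

Lemma Ncount_scaled_le_lambdaQH {s n} (Q : rgraph_on s) (H : rgraph_on n) :
  (0 < n)%N ->
  (s`!)%:R * (Ncount Q H)%:R / n%:R ^+ s
    <= lambdaQH p Q H * n%:R `^ (s%:R / p - s%:R).
Proof.
move=> n_gt0; apply: (le_trans _ (ler_wpM2r (powR_ge0 _ _)
  (PQH_le_lambdaQH Q H _ (pnorm_uniform_unit n_gt0)))).
rewrite PQH_uniform_unit -[leRHS]mulrA uniform_unit_scaling //.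
rewrite ler_wpM2r ?invr_ge0 ?exprn_ge0 // ler_wpM2l //.
by rewrite -natr_sum ler_nat Ncount_le_sum_Ncount_in.
Qed.

End UniformVector.

Section FallingFactorialRatio.
Variable R : realType.

Lemma subn_div_cvg1 k : (fun n : nat => ((n - k)%:R : R) / n%:R) @ \oo --> (1 : R).
Proof.
have inv_cvg0 : (fun n : nat => (n%:R : R)^-1) @ \oo --> 0.
  by rewrite -cvg_shiftS; exact: cvg_harmonic.
have one_sub_cvg1 :
    (fun n : nat => 1 - k%:R * (n%:R : R)^-1) @ \oo --> (1 - k%:R * 0 : R).
  exact: cvgB (cvg_cst _) (cvgM (cvg_cst _) inv_cvg0).
rewrite mulr0 subr0 in one_sub_cvg1.
apply: (cvg_trans _ one_sub_cvg1); apply: near_eq_cvg; near=> n.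
have k_le_n : (k <= n)%N by near: n; exists k.
have n_gt0 : (0 < n)%N by near: n; exists 1%N.
by rewrite natrB // mulrBl mulfV // pnatr_eq0 -lt0n.
Unshelve. all: by end_near. Qed.

Lemma ffact_div_expr_cvg1 k :
  (fun n : nat => ((n ^_ k)%:R : R) / n%:R ^+ k) @ \oo --> (1 : R).
Proof.
elim: k => [|k IHk].
  by under eq_fun => n do rewrite ffactn0 expr0 divr1; exact: cvg_cst.
have -> : (fun n : nat => ((n ^_ k.+1)%:R : R) / n%:R ^+ k.+1) =
    (fun n => ((n ^_ k)%:R / n%:R ^+ k) * ((n - k)%:R / n%:R)).
  by apply: funext => n; rewrite ffactnSr natrM exprSr invfM; ring.
have prod_cvg := cvgM IHk (subn_div_cvg1 k).
by rewrite mulr1 in prod_cvg; exact: prod_cvg.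
Qed.

End FallingFactorialRatio.

Lemma pi_seq_ffact_le_lambda_seq {R : realType} (p : R) {s} (Q : rgraph_on s)
    (P : forall n, pred (rgraph_on n)) n :
  0 < p -> (0 < n)%N -> (s <= n)%N ->
  pi_seq Q P n * ((n ^_ s)%:R / n%:R ^+ s) <= lambda_seq p Q P n.
Proof.
move=> p_gt0 n_gt0 s_le_n; rewrite /pi_seq /lambda_seq.
have bin_neq0 : ('C(n, s)%:R : R) != 0 by rewrite pnatr_eq0 -lt0n bin_gt0.
have expr_neq0 : (n%:R ^+ s : R) != 0 by rewrite expf_neq0 // pnatr_eq0 -lt0n.
have -> : (exQP Q P n)%:R / 'C(n, s)%:R * ((n ^_ s)%:R / n%:R ^+ s) =
          (s`!)%:R * (exQP Q P n)%:R / n%:R ^+ s :> R.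
  by rewrite -bin_ffact natrM; field; rewrite bin_neq0 expr_neq0.
set e := n%:R `^ _; rewrite /exQP.
apply: (big_ind (fun k => (s`!)%:R * k%:R / n%:R ^+ s <= lambdaQPn p Q P n * e)).
- by rewrite mulr0 mul0r mulr_ge0 ?powR_ge0 ?bigmax_ge_id.
- by move=> a b; rewrite /maxn; case: ltnP.
move=> H PH; apply: (le_trans (Ncount_scaled_le_lambdaQH p_gt0 Q H n_gt0)).
by rewrite ler_wpM2r ?powR_ge0 //; apply: le_bigmax_cond.
Qed.

Theorem mainTheorem3 (R : realType) (p : R) (r s : nat)
  (Q : rgraph_on s) (P : forall n, pred (rgraph_on n)) (piQP lamQP : R) :
  1 <= p -> (2 <= r)%N -> (r <= s)%N -> is_rgraph r Q ->
  hereditary_property r P ->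
  pi_seq (R:=R) Q P @ \oo --> piQP ->
  lambda_seq p Q P @ \oo --> lamQP ->
  piQP <= lamQP.
Proof.
move=> p_ge1 _ _ _ _ pi_cvg lambda_cvg.
have p_gt0 : 0 < p by exact: lt_le_trans ltr01 p_ge1.
have := cvgM pi_cvg (ffact_div_expr_cvg1 R s); rewrite mulr1 => pi_ffact_cvg.
apply: (ler_cvg_to (pi_ffact_cvg _) lambda_cvg); near=> n.
apply: pi_seq_ffact_le_lambda_seq => //.
  by near: n; exists 1%N.
by near: n; exists s.
Unshelve. all: by end_near. Qed.
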